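(* Let $\mathbf k=(k_1,\ldots,k_r)\in\mathbb N^r$, $\mathbf m=(m_1,\ldots,m_p)\in\mathbb N^p$ with $m_p\ge2$, $\boldsymbol\eta\in\{\pm1\}^r$, $\boldsymbol\varepsilon\in\{\pm1\}^p$, and $\underline\eta=\eta_1\cdots\eta_r$. Then \[ M\big(m_p,\ldots,m_1,k_1+1,k_2,\ldots,k_r;\underline\eta\,\mathbf q(\boldsymbol\varepsilon),\mathbf p(\boldsymbol\eta)\big) =\sum_{j=1}^p(-1)^{j-1}M\big(m_p,\ldots,m_j;\mathbf q(\varepsilon_{j+1},\ldots,\varepsilon_p),1\big)\,M\Big(\big(\mathbf k;\mathbf p(\boldsymbol\eta)\big)\circledast\big(1,m_1,\ldots,m_{j-1};\mathbf p(\varepsilon_1,\ldots,\varepsilon_j)\big)^\star\Big) \] \[ +\sum_{j=1}^p(-1)^{j-1}M\big(m_p,\ldots,m_j;-\mathbf q(\varepsilon_{j+1},\ldots,\varepsilon_p),-1\big)\,M\Big(\big(\mathbf k;\mathbf p(\boldsymbol\eta)\big)\circledast\big(1,m_1,\ldots,m_{j-1};-\mathbf p(\varepsilon_1,\ldots,\varepsilon_j)\big)^\star\Big) +2(-1)^pM\Big(\big(\mathbf k;\mathbf p(\boldsymbol\eta)\big)\circledast\big(1,\mathbf m;0,\underline\eta\,\mathbf r(\boldsymbol\varepsilon)\big)^\star\Big), \] where for $j=p$ the sign vectors $(\pm\mathbf q(\emptyset),\pm1)$ are just $(\pm1)$.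
   Context: For $\boldsymbol\varepsilon=(\varepsilon_1,\ldots,\varepsilon_r)\in\{\pm1\}^r$: $\mathbf p(\boldsymbol\varepsilon)=(\varepsilon_1\cdots\varepsilon_r,\varepsilon_2\cdots\varepsilon_r,\ldots,\varepsilon_r)$, $\mathbf q(\boldsymbol\varepsilon)=(\varepsilon_1\cdots\varepsilon_r,\ldots,\varepsilon_1\varepsilon_2,\varepsilon_1)$, $\mathbf r(\boldsymbol\varepsilon)=(\varepsilon_1,\varepsilon_1\varepsilon_2,\ldots,\varepsilon_1\cdots\varepsilon_r)$; $a\boldsymbol\varepsilon$ is componentwise. Multiple mixed value: $M(\mathbf k;\boldsymbol\varepsilon)=\sum_{n_1>\cdots>n_r>0}\prod_j(1+\varepsilon_j(-1)^{n_j})/n_j^{k_j}$ ($k_1\ge2$). $M_n$, $M^\star_n$ are the truncations to $n\ge n_1>\cdots$ resp. $n\ge n_1\ge\cdots\ge n_r\ge1$ (empty $=1$). Convoluted MMV: $M((\mathbf k;\boldsymbol\eta)\circledast(\mathbf l;\boldsymbol\varepsilon)^\star)=\sum_{n\ge1}\frac{M_{n-1}(k_2,\ldots,k_r;\eta_2,\ldots,\eta_r)M^\star_n(l_2,\ldots,l_s;\varepsilon_2,\ldots,\varepsilon_s)}{n^{k_1+l_1}}\cdot\frac{(1+\varepsilon_1(-1)^n)(1+\eta_1(-1)^n)}{2}$, for $\eta_1,\varepsilon_1\in\{\pm1,0\}$ not both $0$ and all other signs in $\{\pm1\}$. *)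

From Stdlib Require Import Reals List.
From Coquelicot Require Import Coquelicot.
Import ListNotations.
Open Scope R_scope.

Fixpoint sumR (f : nat -> R) (n : nat) : R :=
  match n with
  | O => 0
  | S n' => sumR f n' + f n
  end.

Definition mterm (k : nat) (e : R) (m : nat) : R :=
  (1 + e * (-1) ^ m) / (INR m) ^ k.

(* M_n(k;e) = sum_{n >= n1 > ... > nr > 0} prod_j (1+e_j(-1)^{n_j})/n_j^{k_j},
   indices/signs given as a list of pairs (k_j, e_j); empty sum/product = 1 *)
Fixpoint Mtr (n : nat) (l : list (nat * R)) : R :=
  match l with
  | [] => 1
  | (k, e) :: l' => sumR (fun m => mterm k e m * Mtr (m - 1)%nat l') n
  end.

(* M*_n(k;e) = sum_{n >= n1 >= ... >= nr >= 1} ... *)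
Fixpoint Mstr (n : nat) (l : list (nat * R)) : R :=
  match l with
  | [] => 1
  | (k, e) :: l' => sumR (fun m => mterm k e m * Mstr m l') n
  end.

Definition MMV (k : list nat) (e : list R) : R :=
  real (Lim_seq (fun n => Mtr n (combine k e))).

Definition MConv (k : list nat) (eta : list R) (l : list nat) (eps : list R) : R :=
  match combine k eta, combine l eps with
  | (k1, eta1) :: a', (l1, eps1) :: b' =>
      real (Lim_seq (fun N => sumR (fun n =>
        Mtr (n - 1)%nat a' * Mstr n b' / (INR n) ^ (k1 + l1)
        * ((1 + eps1 * (-1) ^ n) * (1 + eta1 * (-1) ^ n) / 2)) N))
  | _, _ => 0
  end.

Definition prodR (l : list R) : R := fold_right Rmult 1 l.

Fixpoint pvec (l : list R) : list R :=
  match l with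
  | [] => []
  | e :: l' => (e * prodR l') :: pvec l'
  end.

Fixpoint rvec (l : list R) : list R :=
  match l with
  | [] => []
  | e :: l' => e :: map (Rmult e) (rvec l')
  end.

Definition qvec (l : list R) : list R := rev (rvec l).

Definition is_sign (x : R) : Prop := x = 1 \/ x = -1.

From Stdlib Require Import Reals List Lia Lra.
From Coquelicot Require Import Coquelicot.
Import ListNotations.
Open Scope R_scope.

(* Put etab = eta_1...eta_r, L = ((m_1, etab e_1), (m_2, etab e_1 e_2), ...,
   (m_p, etab e_1...e_p)), B = ((k_2, .), ..., (k_r, .)) with the signs p(eta_2..eta_r),
   and h(x) = (1 + etab (-1)^x) / x^(k_1+1) * M_{x-1}(B).  Then the truncated left-hand
   side is  M_N = sum_{x <= N} h(x) * S_N(x), where S_N(x) sums the L-factors over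
   N >= n_p > ... > n_1 > x.
   1. Finite identity: inclusion-exclusion on the constraint n_1 > x gives
        S_N(x) = sum_{j<p} (-1)^j M_N(L_p..L_{j+1}) M*_x(L_1..L_j) + (-1)^p M*_x(L)
      ([split_lower_bound]), hence a finite decomposition of M_N ([truncated_decomposition]).
   2. Growth bounds: with q(n) = n^(1/4), truncated values of depth d are at most
      16^d q(n+1); every series in sight is then dominated by n^(-3/2), so the finite
      identity passes to the limit termwise ([limit_decomposition]).
   3. Sign bookkeeping: for each j exactly one of the two sign choices on the right
      reproduces the signs of L; for the other one the parity factor of the convoluted
      value vanishes identically ([paired_terms]).  The last convoluted value, with
      leading sign 0, is half of the (-1)^p term ([conv_zero_sign]). *)

Fixpoint sum0 (f : nat -> R) (n : nat) : R :=
  match n with O => 0 | S n' => sum0 f n' + f n' end.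

Lemma sumR_ext f g n : (forall m, (1 <= m <= n)%nat -> f m = g m) -> sumR f n = sumR g n.
Proof.
  induction n; simpl; intros H; auto.
  rewrite IHn, H; [reflexivity | lia | intros; apply H; lia].
Qed.

Lemma sumR_plus f g n : sumR (fun m => f m + g m) n = sumR f n + sumR g n.
Proof. induction n; simpl; [lra | rewrite IHn; lra]. Qed.

Lemma sumR_scal c f n : sumR (fun m => c * f m) n = c * sumR f n.
Proof. induction n; simpl; [lra | rewrite IHn; lra]. Qed.

Lemma sumR_zero n : sumR (fun _ => 0) n = 0.
Proof. induction n; simpl; [lra | rewrite IHn; lra]. Qed.

Lemma sumR_le f g n : (forall m, (1 <= m <= n)%nat -> f m <= g m) -> sumR f n <= sumR g n.
Proof.
  induction n; simpl; intros H; [lra |].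
  apply Rplus_le_compat; [apply IHn; intros; apply H | apply H]; lia.
Qed.

Lemma sumR_nonneg f n : (forall m, (1 <= m <= n)%nat -> 0 <= f m) -> 0 <= sumR f n.
Proof. intros H. rewrite <- (sumR_zero n). now apply sumR_le. Qed.

Lemma sumR_as_sum0 F n : sumR F n = sum0 (fun j => F (S j)) n.
Proof. induction n; simpl; auto. now rewrite IHn. Qed.

Lemma sum0_plus f g n : sum0 (fun m => f m + g m) n = sum0 f n + sum0 g n.
Proof. induction n; simpl; [lra | rewrite IHn; lra]. Qed.

Lemma sum0_scal c f n : sum0 (fun m => c * f m) n = c * sum0 f n.
Proof. induction n; simpl; [lra | rewrite IHn; lra]. Qed.

Lemma sum0_ext f g n : (forall m, (m < n)%nat -> f m = g m) -> sum0 f n = sum0 g n.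
Proof.
  induction n; simpl; intros H; auto.
  rewrite IHn, H; [reflexivity | lia | intros; apply H; lia].
Qed.

Lemma sum0_shift f n : sum0 f (S n) = f O + sum0 (fun j => f (S j)) n.
Proof. induction n; simpl in *; [lra |]. rewrite IHn. lra. Qed.

Lemma sumR_sum0 F n K :
  sumR (fun m => sum0 (fun x => F m x) K) n = sum0 (fun x => sumR (fun m => F m x) n) K.
Proof.
  induction K; simpl; [now rewrite sumR_zero |].
  now rewrite sumR_plus, IHK.
Qed.

Lemma Mtr_nil n : Mtr n [] = 1.
Proof. destruct n; reflexivity. Qed.

Lemma Mtr_cons n k e l : Mtr n ((k, e) :: l) = sumR (fun m => mterm k e m * Mtr (m - 1)%nat l) n.
Proof. destruct n; reflexivity. Qed.

Lemma Mstr_nil n : Mstr n [] = 1.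
Proof. destruct n; reflexivity. Qed.

Lemma Mstr_cons n k e l : Mstr n ((k, e) :: l) = sumR (fun m => mterm k e m * Mstr m l) n.
Proof. destruct n; reflexivity. Qed.

Fixpoint Mtr_weighted (n : nat) (l : list (nat * R)) (G : nat -> R) {struct l} : R :=
  match l with
  | [] => G n
  | (k, e) :: l' => sumR (fun m => mterm k e m * Mtr_weighted (m - 1)%nat l' G) n
  end.

Lemma Mtr_app n A B : Mtr n (A ++ B) = Mtr_weighted n A (fun t => Mtr t B).
Proof.
  revert n; induction A as [|[k e] A IH]; intros n; simpl; [reflexivity |].
  rewrite Mtr_cons. apply sumR_ext; intros. now rewrite IH.
Qed.

Lemma Mtr_weighted_ext n A G1 G2 :
  (forall t, (t <= n)%nat -> G1 t = G2 t) -> Mtr_weighted n A G1 = Mtr_weighted n A G2.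
Proof.
  revert n; induction A as [|[k e] A IH]; intros n H; simpl; [apply H; lia |].
  apply sumR_ext; intros; f_equal; apply IH; intros; apply H; lia.
Qed.

Lemma Mtr_weighted_plus n A G1 G2 :
  Mtr_weighted n A (fun t => G1 t + G2 t) = Mtr_weighted n A G1 + Mtr_weighted n A G2.
Proof.
  revert n; induction A as [|[k e] A IH]; intros n; simpl; [reflexivity |].
  rewrite <- sumR_plus. apply sumR_ext; intros. rewrite IH. ring.
Qed.

Lemma Mtr_weighted_scal n A c G :
  Mtr_weighted n A (fun t => c * G t) = c * Mtr_weighted n A G.
Proof.
  revert n; induction A as [|[k e] A IH]; intros n; simpl; [reflexivity |].
  rewrite <- sumR_scal. apply sumR_ext; intros. rewrite IH. ring.
Qed.

Lemma Mtr_weighted_sum n A F K :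
  Mtr_weighted n A (fun t => sumR (fun x => F x t) K) = sumR (fun x => Mtr_weighted n A (F x)) K.
Proof.
  induction K; simpl.
  - revert n; induction A as [|[k e] A IH]; intros n; simpl; [reflexivity |].
    transitivity (sumR (fun _ => 0) n); [| apply sumR_zero].
    apply sumR_ext; intros. rewrite IH. ring.
  - now rewrite Mtr_weighted_plus, IHK.
Qed.

Lemma Mtr_weighted_snoc n A k e G : Mtr_weighted n (A ++ [(k, e)]) G =
  Mtr_weighted n A (fun t => sumR (fun y => mterm k e y * G (y - 1)%nat) t).
Proof.
  revert n; induction A as [|[k' e'] A IH]; intros n; simpl; [reflexivity |].
  apply sumR_ext; intros. now rewrite IH.
Qed.

(** * The finite identity *)

Definition above (x t : nat) : R := if Nat.leb x t then 1 else 0.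

Lemma sumR_above_r f x t : sumR (fun y => f y * above y t) x = sumR f (Nat.min x t).
Proof.
  induction x; [destruct t; reflexivity |].
  cbn [sumR]. unfold above at 2. destruct (Nat.leb_spec (S x) t).
  - rewrite IHx, Nat.min_l, Nat.min_l by lia. cbn [sumR]. ring.
  - rewrite IHx, Nat.min_r, Nat.min_r by lia. ring.
Qed.

Lemma sumR_above_l f x t :
  sumR (fun y => f y * above x (y - 1)) t = sumR f t - sumR f (Nat.min t x).
Proof.
  induction t; [destruct x; simpl; ring |].
  cbn [sumR]. unfold above at 2. destruct (Nat.leb_spec x (S t - 1)).
  - rewrite IHt, (Nat.min_r t x), (Nat.min_r (S t) x) by lia. ring.
  - rewrite IHt, (Nat.min_l t x), (Nat.min_l (S t) x) by lia. cbn [sumR]. ring.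
Qed.

(* Induction on L: the innermost constraint n_1 > x is "all n_1" minus "n_1 <= x". *)
Lemma split_lower_bound L x N : (x <= N)%nat ->
  Mtr_weighted N (rev L) (above x) =
  sum0 (fun j => (-1) ^ j * Mtr N (rev (skipn j L)) * Mstr x (firstn j L)) (length L)
  + (-1) ^ (length L) * Mstr x L.
Proof.
  revert x; induction L as [|[k e] L IH]; intros x Hx.
  { simpl. rewrite Mstr_nil. unfold above. destruct (Nat.leb_spec x N); [lra | lia]. }
  set (T j y := (-1) ^ j * Mtr N (rev (skipn j L)) * (mterm k e y * Mstr y (firstn j L))).
  assert (Hsplit : forall t, sumR (fun y => mterm k e y * above x (y - 1)) t =
            sumR (mterm k e) t + (-1) * sumR (fun y => mterm k e y * above y t) x).
  { intros t. rewrite sumR_above_l, sumR_above_r, Nat.min_comm. ring. }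
  assert (Hinner : forall y, (1 <= y <= x)%nat ->
            Mtr_weighted N (rev L) (fun t => mterm k e y * above y t) =
            sum0 (fun j => T j y) (length L) + (-1) ^ length L * (mterm k e y * Mstr y L)).
  { intros y Hy. rewrite Mtr_weighted_scal, IH, Rmult_plus_distr_l, <- sum0_scal by lia.
    unfold T. rewrite (sum0_ext _ (fun j => (-1) ^ j * Mtr N (rev (skipn j L))
                                        * (mterm k e y * Mstr y (firstn j L)))); [ring |].
    intros; ring. }
  assert (Hfull : Mtr_weighted N (rev L) (sumR (mterm k e)) = Mtr N (rev ((k, e) :: L))).
  { simpl. rewrite Mtr_app. apply Mtr_weighted_ext; intros.
    rewrite Mtr_cons. apply sumR_ext; intros. rewrite Mtr_nil; ring. }
  simpl rev. rewrite Mtr_weighted_snoc.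
  rewrite (Mtr_weighted_ext _ _ _ (fun t => sumR (mterm k e) t
             + (-1) * sumR (fun y => mterm k e y * above y t) x)) by (intros; apply Hsplit).
  rewrite Mtr_weighted_plus, Mtr_weighted_scal, Mtr_weighted_sum, Hfull.
  rewrite (sumR_ext _ _ _ Hinner), sumR_plus, sumR_sum0, sumR_scal.
  simpl length. rewrite sum0_shift.
  rewrite (sum0_ext (fun j => _ * Mtr N (rev (skipn (S j) ((k, e) :: L)))
                             * Mstr x (firstn (S j) ((k, e) :: L)))
                    (fun j => (-1) * sumR (fun y => T j y) x)).
  - rewrite sum0_scal, Mstr_cons. simpl. rewrite Mstr_nil. ring.
  - intros j _. unfold T. rewrite sumR_scal. simpl. rewrite Mstr_cons. ring.
Qed.

(* The truncated value of (L_p, ..., L_1, (k, e), B) as a finite combination of products: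
   the outer block is summed with the index x of (k, e) as lower bound. *)
Lemma truncated_decomposition L k e B N :
  Mtr N (rev L ++ (k, e) :: B) =
  sum0 (fun j => (-1) ^ j * Mtr N (rev (skipn j L))
                 * sumR (fun x => mterm k e x * (Mtr (x - 1)%nat B * Mstr x (firstn j L))) N)
       (length L)
  + (-1) ^ length L * sumR (fun x => mterm k e x * (Mtr (x - 1)%nat B * Mstr x L)) N.
Proof.
  set (h x := mterm k e x * Mtr (x - 1)%nat B).
  rewrite Mtr_app.
  rewrite (Mtr_weighted_ext _ _ _ (fun t => sumR (fun x => h x * above x t) N)).
  2:{ intros t Ht. rewrite sumR_above_r, Nat.min_r, Mtr_cons by lia. reflexivity. }
  rewrite Mtr_weighted_sum.
  rewrite (sumR_ext _ (fun x => sum0 (fun j => (-1) ^ j * Mtr N (rev (skipn j L))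
                          * (mterm k e x * (Mtr (x - 1)%nat B * Mstr x (firstn j L)))) (length L)
                        + (-1) ^ length L * (mterm k e x * (Mtr (x - 1)%nat B * Mstr x L)))).
  - rewrite sumR_plus, sumR_sum0, sumR_scal. f_equal.
    apply sum0_ext; intros. apply sumR_scal.
  - intros x Hx. rewrite Mtr_weighted_scal, split_lower_bound by lia.
    rewrite Rmult_plus_distr_l, <- sum0_scal. unfold h.
    rewrite (sum0_ext _ (fun j => (-1) ^ j * Mtr N (rev (skipn j L))
                    * (mterm k e x * (Mtr (x - 1)%nat B * Mstr x (firstn j L))))); [ring |].
    intros; ring.
Qed.

Lemma sign_sq x : is_sign x -> x * x = 1.
Proof. intros [-> | ->]; ring. Qed.

Lemma sign_mul a b : is_sign a -> is_sign b -> is_sign (a * b).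
Proof. intros [-> | ->] [-> | ->]; [left | right | right | left]; ring. Qed.

Lemma sign_bounded x : is_sign x -> -1 <= x <= 1.
Proof. intros [-> | ->]; lra. Qed.

Lemma pow_m1_sign n : is_sign ((-1) ^ n).
Proof. induction n; simpl; [left; reflexivity |]. apply sign_mul; [right |]; auto. Qed.

Lemma prodR_sign l : List.Forall is_sign l -> is_sign (prodR l).
Proof. induction 1; simpl; [left; reflexivity | now apply sign_mul]. Qed.

Lemma prodR_app a b : prodR (a ++ b) = prodR a * prodR b.
Proof. induction a; simpl; [ring | rewrite IHa; ring]. Qed.

Lemma Forall_skipn {A} (P : A -> Prop) l j : List.Forall P l -> List.Forall P (skipn j l).
Proof. revert l; induction j; intros [|x l] H; simpl; auto. inversion H; auto. Qed.

Lemma Forall_firstn {A} (P : A -> Prop) l j : List.Forall P l -> List.Forall P (firstn j l).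
Proof. revert l; induction j; intros [|x l] H; simpl; auto. inversion H; auto. Qed.

Lemma sign_map s l : is_sign s -> List.Forall is_sign l -> List.Forall is_sign (map (Rmult s) l).
Proof.
  intros Hs H. apply Forall_map. eapply Forall_impl; [| exact H]. intros; now apply sign_mul.
Qed.

Lemma sign_rvec l : List.Forall is_sign l -> List.Forall is_sign (rvec l).
Proof. induction 1; simpl; constructor; auto. now apply sign_map. Qed.

Lemma sign_pvec l : List.Forall is_sign l -> List.Forall is_sign (pvec l).
Proof. induction 1; simpl; constructor; auto. apply sign_mul; auto. now apply prodR_sign. Qed.

Lemma length_rvec l : length (rvec l) = length l.
Proof. induction l; simpl; auto. rewrite length_map; auto. Qed.

Lemma map_Rmult_1 l : map (Rmult 1) l = l.
Proof. rewrite map_ext with (g := fun x => x) by (intros; ring). apply map_id. Qed.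

Lemma map_Ropp_Rmult l : map Ropp l = map (Rmult (-1)) l.
Proof. apply map_ext. intros; ring. Qed.

Lemma rvec_skipn l j : skipn j (rvec l) = map (Rmult (prodR (firstn j l))) (rvec (skipn j l)).
Proof.
  revert l; induction j; intros l.
  - simpl. now rewrite map_Rmult_1.
  - destruct l as [|e l]; simpl; auto.
    rewrite skipn_map, IHj, map_map. apply map_ext; intros; ring.
Qed.

Lemma rvec_firstn l n : rvec (firstn n l) = firstn n (rvec l).
Proof.
  revert l; induction n; intros [|e l]; simpl; auto.
  now rewrite IHn, firstn_map.
Qed.

Lemma pvec_rvec l : List.Forall is_sign l ->
  pvec l = map (Rmult (prodR l)) (firstn (length l) (1 :: rvec l)).
Proof.
  induction 1 as [|e l He Hl IH]; simpl; auto.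
  f_equal; [ring |]. rewrite IH. destruct l as [|e' l']; [reflexivity |].
  change (length (e' :: l')) with (S (length l')).
  rewrite !firstn_cons, firstn_map. simpl map. rewrite map_map.
  pose proof (sign_sq e He) as Hee. f_equal.
  - transitivity (e * e * (e' * prodR l')); [rewrite Hee |]; ring.
  - apply map_ext. intros a.
    transitivity (e * e * (e' * prodR l') * a); [rewrite Hee |]; ring.
Qed.

Lemma combine_app {A B} (a b : list A) (c d : list B) : length a = length c ->
  combine (a ++ b) (c ++ d) = combine a c ++ combine b d.
Proof.
  revert c; induction a as [|x a IH]; intros [|y c] H; simpl in *; try lia; auto.
  rewrite IH by lia; auto.
Qed.

Lemma combine_rev {A B} (a : list A) (c : list B) : length a = length c ->
  combine (rev a) (rev c) = rev (combine a c).
Proof.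
  revert c; induction a as [|x a IH]; intros [|y c] H; simpl in *; try lia; auto.
  rewrite combine_app by (rewrite !length_rev; lia). rewrite IH by lia. reflexivity.
Qed.

Lemma combine_skipn {A B} (a : list A) (c : list B) n :
  skipn n (combine a c) = combine (skipn n a) (skipn n c).
Proof.
  revert a c; induction n; intros [|x a] [|y c]; simpl; auto.
  destruct (skipn n a); reflexivity.
Qed.

Lemma map_fst_combine {A B} (a : list A) (b : list B) : length a = length b ->
  map fst (combine a b) = a.
Proof.
  revert b; induction a; intros [|y b] H; simpl in *; try lia; auto.
  rewrite IHa by lia; reflexivity.
Qed.

Lemma skipn_nth {A} (l : list A) j d : (j < length l)%nat ->
  skipn j l = nth j l d :: skipn (S j) l.
Proof. revert l; induction j; intros [|x l] H; simpl in *; try lia; auto. apply IHj; lia. Qed.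

Lemma firstn_S_nth {A} (l : list A) j d : (j < length l)%nat ->
  firstn (S j) l = firstn j l ++ [nth j l d].
Proof.
  revert l; induction j; intros [|x l] H; simpl in *; try lia; auto.
  f_equal. rewrite <- IHj by lia. reflexivity.
Qed.

Lemma last_skipn {A} (l : list A) j d : (j < length l)%nat -> last (skipn j l) d = last l d.
Proof.
  revert l; induction j; intros [|x l] H; simpl in *; try lia; auto.
  rewrite IHj by lia. destruct l; simpl in *; [lia | reflexivity].
Qed.

Lemma last_map {A B} (f : A -> B) l d : last (map f l) (f d) = f (last l d).
Proof. induction l; simpl; auto. destruct l; simpl in *; auto. Qed.

(** * Growth bounds *)

(* q(n) = n^(1/4): truncated values of a fixed depth grow at most like q. *)
Definition root4 (n : nat) : R := sqrt (sqrt (INR n)).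

Lemma root4_ge0 n : 0 <= root4 n.
Proof. apply sqrt_pos. Qed.

Lemma root4_mono n m : (n <= m)%nat -> root4 n <= root4 m.
Proof. intros H. apply sqrt_le_1_alt, sqrt_le_1_alt, le_INR, H. Qed.

Lemma root4_ge1 n : (1 <= n)%nat -> 1 <= root4 n.
Proof.
  intros H. pose proof (root4_mono 1 n H) as H1.
  unfold root4 in *. simpl INR in H1. now rewrite !sqrt_1 in H1.
Qed.

Lemma root4_sq n : root4 n * root4 n = sqrt (INR n).
Proof. apply sqrt_sqrt, sqrt_pos. Qed.

Lemma root4_pow4 n : (root4 n * root4 n) * (root4 n * root4 n) = INR n.
Proof. rewrite root4_sq. apply sqrt_sqrt, pos_INR. Qed.

Lemma pow4_le a b : 0 <= a -> 0 <= b -> (a * a) * (a * a) <= (b * b) * (b * b) -> a <= b.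
Proof.
  intros Ha Hb H. destruct (Rle_or_lt a b) as [| Hlt]; auto.
  assert (b * b < a * a) by nra. assert ((b * b) * (b * b) < (a * a) * (a * a)) by nra. lra.
Qed.

(* (n+1)^(1/4) <= 2 n^(1/4), since n + 1 <= 16 n. *)
Lemma root4_S n : (1 <= n)%nat -> root4 (S n) <= 2 * root4 n.
Proof.
  intros H. pose proof (root4_ge0 n). apply pow4_le; [apply root4_ge0 | lra |].
  replace (2 * root4 n * (2 * root4 n) * (2 * root4 n * (2 * root4 n)))
    with (16 * ((root4 n * root4 n) * (root4 n * root4 n))) by ring.
  rewrite !root4_pow4, S_INR. apply le_INR in H. simpl in H. lra.
Qed.

(* sum_{m <= n} q(m)/m <= 4 q(n): with a = q(m), b = q(m-1) one has a^4 - b^4 = 1, so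
   q(m)/m = a^-3 <= 4 (a - b), and the right-hand sides telescope. *)
Lemma sum_root4 n : sumR (fun m => root4 m / INR m) n <= 4 * root4 n.
Proof.
  induction n; [simpl; unfold root4; simpl; rewrite sqrt_0, sqrt_0; lra |].
  cbn [sumR]. set (a := root4 (S n)). set (b := root4 n).
  assert (Ha : 1 <= a) by (apply root4_ge1; lia).
  assert (Hb : 0 <= b) by apply root4_ge0.
  assert (Hab : b <= a) by (apply root4_mono; lia).
  assert (E : a * a * (a * a) = b * b * (b * b) + 1)
    by (unfold a, b; rewrite !root4_pow4, S_INR; ring).
  assert (Hinv : / (a * a * a) <= 4 * (a - b)).
  { assert (F : (a - b) * (a * a * a + a * a * b + a * b * b + b * b * b) = 1) by nra.
    assert (G : a * a * a + a * a * b + a * b * b + b * b * b <= 4 * (a * a * a)).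
    { assert (b * b <= a * a) by nra. assert (b * b * b <= a * a * a) by nra.
      assert (a * a * b <= a * a * a) by nra. assert (a * b * b <= a * a * a) by nra. lra. }
    assert (Ha3 : 0 < a * a * a) by (repeat apply Rmult_lt_0_compat; lra).
    apply Rmult_le_reg_l with (a * a * a); [exact Ha3 |].
    rewrite Rinv_r by lra. nra. }
  replace (INR (S n)) with (a * a * (a * a)) by (unfold a; apply root4_pow4).
  replace (a / (a * a * (a * a))) with (/ (a * a * a)) by (field; lra).
  fold b in IHn. lra.
Qed.

(* sum_{m <= n} m^(-3/2) + 2/sqrt(n) <= 3, by comparison with the integral of x^(-3/2). *)
Lemma sum_pow32_aux n : (1 <= n)%nat ->
  sumR (fun m => / (INR m * sqrt (INR m))) n + 2 * / sqrt (INR n) <= 3.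
Proof.
  induction n as [|n IH]; intros H; [lia |].
  destruct (Nat.eq_dec n 0) as [-> | Hn]; [simpl; rewrite Rplus_0_l, Rmult_1_l, sqrt_1; lra |].
  specialize (IH ltac:(lia)). cbn [sumR].
  set (s := sqrt (INR n)). set (t := sqrt (INR (S n))).
  assert (Hs1 : 1 <= s). { unfold s. rewrite <- sqrt_1. apply sqrt_le_1_alt, (le_INR 1); lia. }
  assert (Hst : s <= t) by (apply sqrt_le_1_alt, le_INR; lia).
  assert (Es : s * s = INR n) by (apply sqrt_sqrt, pos_INR).
  assert (Et : t * t = INR n + 1) by (unfold t; rewrite sqrt_sqrt, S_INR; [ring | apply pos_INR]).
  replace (INR (S n)) with (t * t) by (rewrite Et, S_INR; ring).
  assert (K : / (t * t * t) + 2 * / t <= 2 * / s).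
  { assert (Hk : s + 2 * s * (t * t) <= 2 * (t * t * t)) by nra.
    replace (/ (t * t * t) + 2 * / t) with ((s + 2 * s * (t * t)) / (s * (t * t * t)))
      by (field; lra).
    replace (2 * / s) with ((2 * (t * t * t)) / (s * (t * t * t))) by (field; lra).
    apply Rmult_le_compat_r; auto. apply Rlt_le, Rinv_0_lt_compat. nra. }
  fold s in IH. lra.
Qed.

Lemma sum_pow32 n : sumR (fun m => / (INR m * sqrt (INR m))) n <= 3.
Proof.
  destruct n; [simpl; lra |].
  pose proof (sum_pow32_aux (S n) ltac:(lia)).
  assert (0 <= 2 * / sqrt (INR (S n))).
  { apply Rmult_le_pos; [lra |]. apply Rlt_le, Rinv_0_lt_compat, sqrt_lt_R0, lt_0_INR; lia. }
  lra.
Qed.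

Lemma root4_pair_bound m : (1 <= m)%nat ->
  root4 m * root4 (S m) / INR m ^ 2 <= 2 * / (INR m * sqrt (INR m)).
Proof.
  intros Hm. pose proof (root4_S m Hm). pose proof (root4_ge1 m Hm).
  assert (Hm1 : 1 <= INR m) by (apply (le_INR 1); lia).
  apply Rle_trans with (2 * (root4 m * root4 m) / INR m ^ 2).
  { unfold Rdiv. apply Rmult_le_compat_r; [| nra].
    apply Rlt_le, Rinv_0_lt_compat, pow_lt. lra. }
  rewrite root4_sq.
  assert (0 < sqrt (INR m)) by (apply sqrt_lt_R0; lra).
  rewrite <- (sqrt_sqrt (INR m)) at 2 3 by lra.
  right. field. lra.
Qed.

(* Index lists with weights k >= 1 and signs in [-1, 1]: all factors are nonnegative. *)
Definition admissible (l : list (nat * R)) : Prop :=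
  List.Forall (fun p => (1 <= fst p)%nat /\ -1 <= snd p <= 1) l.

Lemma admissible_combine ks es : List.Forall (fun x => (0 < x)%nat) ks ->
  List.Forall (fun e => -1 <= e <= 1) es -> admissible (combine ks es).
Proof.
  revert es; induction ks; intros [|e es] H1 H2; simpl; constructor;
    inversion H1; inversion H2; [simpl; split; auto; lia | apply IHks; auto].
Qed.

Lemma sign_list_bounded l : List.Forall is_sign l -> List.Forall (fun e => -1 <= e <= 1) l.
Proof. apply Forall_impl, sign_bounded. Qed.

Lemma mterm_nonneg k e m : (1 <= m)%nat -> -1 <= e <= 1 -> 0 <= mterm k e m.
Proof.
  intros Hm He. unfold mterm. assert (1 <= INR m) by (apply (le_INR 1); lia).
  apply Rmult_le_pos; [destruct (pow_m1_sign m) as [-> | ->]; lra |].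
  apply Rlt_le, Rinv_0_lt_compat, pow_lt. lra.
Qed.

Lemma mterm_le k e m j : (1 <= m)%nat -> (j <= k)%nat -> -1 <= e <= 1 ->
  mterm k e m <= 2 / INR m ^ j.
Proof.
  intros Hm Hk He. unfold mterm. assert (1 <= INR m) by (apply (le_INR 1); lia).
  apply Rmult_le_compat; [destruct (pow_m1_sign m) as [-> | ->]; lra | | |].
  - apply Rlt_le, Rinv_0_lt_compat, pow_lt. lra.
  - destruct (pow_m1_sign m) as [-> | ->]; lra.
  - apply Rinv_le_contravar; [apply pow_lt; lra | now apply Rle_pow].
Qed.

Lemma Mtr_nonneg n l : admissible l -> 0 <= Mtr n l.
Proof.
  revert n; induction l as [|[k e] l IH]; intros n Hg; [rewrite Mtr_nil; lra |].
  inversion Hg as [| ? ? [Hk He] Hg']; subst. rewrite Mtr_cons.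
  apply sumR_nonneg. intros. apply Rmult_le_pos; [apply mterm_nonneg; auto; lia | auto].
Qed.

Lemma Mstr_nonneg n l : admissible l -> 0 <= Mstr n l.
Proof.
  revert n; induction l as [|[k e] l IH]; intros n Hg; [rewrite Mstr_nil; lra |].
  inversion Hg as [| ? ? [Hk He] Hg']; subst. rewrite Mstr_cons.
  apply sumR_nonneg. intros. apply Rmult_le_pos; [apply mterm_nonneg; auto; lia | auto].
Qed.

(* One more summation costs a factor 16: if 0 <= F m <= 2 C q(m), then
   sum_{m <= n} mterm(m) F(m) <= 4 C sum q(m)/m <= 16 C q(n+1). *)
Lemma sum_factor_bound k e F C n : (1 <= k)%nat -> -1 <= e <= 1 -> 0 <= C ->
  (forall m, (1 <= m)%nat -> 0 <= F m <= 2 * C * root4 m) ->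
  sumR (fun m => mterm k e m * F m) n <= 16 * C * root4 (S n).
Proof.
  intros Hk He HC HF.
  apply Rle_trans with (sumR (fun m => 4 * C * (root4 m / INR m)) n).
  - apply sumR_le. intros m Hm. destruct (HF m) as [HF0 HF1]; [lia |].
    pose proof (mterm_le k e m 1 ltac:(lia) Hk He) as Ht. rewrite pow_1 in Ht.
    apply Rle_trans with (2 / INR m * (2 * C * root4 m)).
    + apply Rmult_le_compat; auto. apply mterm_nonneg; [lia | auto].
    + right. unfold Rdiv. ring.
  - rewrite sumR_scal. pose proof (sum_root4 n). pose proof (root4_mono n (S n) ltac:(lia)).
    nra.
Qed.

Lemma Mtr_bound n l : admissible l -> Mtr n l <= 16 ^ length l * root4 (S n).
Proof.
  revert n; induction l as [|[k e] l IH]; intros n Hg.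
  { rewrite Mtr_nil. simpl. pose proof (root4_ge1 (S n) ltac:(lia)). lra. }
  inversion Hg as [| ? ? [Hk He] Hg']; subst. rewrite Mtr_cons.
  simpl length. rewrite <- tech_pow_Rmult.
  apply sum_factor_bound; auto; [apply pow_le; lra |].
  intros m Hm. split; [now apply Mtr_nonneg |].
  pose proof (IH (m - 1)%nat Hg') as H. replace (S (m - 1)) with m in H by lia.
  pose proof (pow_le 16 (length l) ltac:(lra)). pose proof (root4_ge0 m). nra.
Qed.

Lemma Mstr_bound n l : admissible l -> Mstr n l <= 16 ^ length l * root4 (S n).
Proof.
  revert n; induction l as [|[k e] l IH]; intros n Hg.
  { rewrite Mstr_nil. simpl. pose proof (root4_ge1 (S n) ltac:(lia)). lra. }
  inversion Hg as [| ? ? [Hk He] Hg']; subst. rewrite Mstr_cons.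
  simpl length. rewrite <- tech_pow_Rmult.
  apply sum_factor_bound; auto; [apply pow_le; lra |].
  intros m Hm. split; [now apply Mstr_nonneg |].
  pose proof (IH m Hg'). pose proof (root4_S m ltac:(lia)).
  pose proof (pow_le 16 (length l) ltac:(lra)). nra.
Qed.

(** * Passing to the limit *)

(* A series sum mterm_k(m) X(m) with k >= 2 and 0 <= X(m) <= D q(m) q(m+1) converges:
   its terms are at most 4 D m^(-3/2). *)
Lemma weighted_series_converges k e X D : (2 <= k)%nat -> -1 <= e <= 1 -> 0 <= D ->
  (forall m, (1 <= m)%nat -> 0 <= X m <= D * (root4 m * root4 (S m))) ->
  ex_finite_lim_seq (sumR (fun m => mterm k e m * X m)).
Proof.
  intros Hk He HD HX. apply ex_finite_lim_seq_incr with (M := 4 * D * 3).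
  - intros n. simpl. destruct (HX (S n)) as [H0 _]; [lia |].
    pose proof (mterm_nonneg k e (S n) ltac:(lia) He). nra.
  - intros n. apply Rle_trans with (sumR (fun m => 4 * D * / (INR m * sqrt (INR m))) n).
    + apply sumR_le. intros m Hm. destruct (HX m) as [H0 H1]; [lia |].
      pose proof (mterm_le k e m 2 ltac:(lia) Hk He).
      pose proof (mterm_nonneg k e m ltac:(lia) He).
      pose proof (root4_pair_bound m ltac:(lia)).
      apply Rle_trans with (2 * D * (root4 m * root4 (S m) / INR m ^ 2)); [| nra].
      apply Rle_trans with (2 / INR m ^ 2 * (D * (root4 m * root4 (S m)))).
      * now apply Rmult_le_compat.
      * right. unfold Rdiv. ring.
    + rewrite sumR_scal. pose proof (sum_pow32 n). nra.
Qed.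

Lemma ex_finite_lim_seq_ext u v :
  (forall n, u n = v n) -> ex_finite_lim_seq u -> ex_finite_lim_seq v.
Proof. intros E [l H]. exists l. eapply is_lim_seq_ext; eauto. Qed.

Lemma Mtr_converges k e l : admissible l -> (2 <= k)%nat -> -1 <= e <= 1 ->
  ex_finite_lim_seq (fun N => Mtr N ((k, e) :: l)).
Proof.
  intros Hl Hk He.
  apply ex_finite_lim_seq_ext with (sumR (fun m => mterm k e m * Mtr (m - 1)%nat l)).
  { intros N. symmetry. apply Mtr_cons. }
  apply (weighted_series_converges k e (fun m => Mtr (m - 1)%nat l) (16 ^ length l));
    auto; [apply pow_le; lra |].
  intros m Hm. cbv beta. split; [now apply Mtr_nonneg |].
  pose proof (Mtr_bound (m - 1) l Hl) as H. replace (S (m - 1)) with m in H by lia.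
  pose proof (root4_ge1 (S m) ltac:(lia)).
  assert (0 <= 16 ^ length l * root4 m)
    by (apply Rmult_le_pos; [apply pow_le; lra | apply root4_ge0]).
  nra.
Qed.

Lemma Mtr_rev_converges l : admissible l -> (2 <= fst (last l (0%nat, 0%R)))%nat ->
  ex_finite_lim_seq (fun N => Mtr N (rev l)).
Proof.
  intros Hl Hlast.
  assert (Hne : l <> []) by (intros ->; simpl in Hlast; lia).
  rewrite (app_removelast_last (0%nat, 0%R) Hne) in Hl |- *.
  rewrite rev_unit. destruct (last l (0%nat, 0%R)) as [k e] eqn:E. simpl in Hlast.
  apply Forall_app in Hl as [Hl1 Hl2]. inversion Hl2 as [| ? ? [_ He] _]; subst.
  apply Mtr_converges; auto. now apply Forall_rev.
Qed.

Lemma conv_converges k e B l : (2 <= k)%nat -> -1 <= e <= 1 -> admissible B -> admissible l ->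
  ex_finite_lim_seq (sumR (fun x => mterm k e x * (Mtr (x - 1)%nat B * Mstr x l))).
Proof.
  intros Hk He HB Hl.
  apply (weighted_series_converges k e _ (16 ^ length B * 16 ^ length l)); auto.
  { apply Rmult_le_pos; apply pow_le; lra. }
  intros m Hm. pose proof (Mtr_nonneg (m - 1) B HB). pose proof (Mstr_nonneg m l Hl).
  split; [now apply Rmult_le_pos |].
  pose proof (Mtr_bound (m - 1) B HB) as HMB. replace (S (m - 1)) with m in HMB by lia.
  pose proof (Mstr_bound m l Hl).
  replace (16 ^ length B * 16 ^ length l * (root4 m * root4 (S m)))
    with ((16 ^ length B * root4 m) * (16 ^ length l * root4 (S m))) by ring.
  now apply Rmult_le_compat.
Qed.

Definition Mlim (l : list (nat * R)) : R := real (Lim_seq (fun N => Mtr N l)).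

(* sum_{x >= 1} (1 + e(-1)^x)/x^k * M_{x-1}(B) M*_x(l): a convoluted value whose two
   leading signs agree. *)
Definition conv_lim (k : nat) (e : R) (B l : list (nat * R)) : R :=
  real (Lim_seq (sumR (fun x => mterm k e x * (Mtr (x - 1)%nat B * Mstr x l)))).

Lemma lim_real u (l : R) : is_lim_seq u l -> real (Lim_seq u) = l.
Proof. intros H. now rewrite (is_lim_seq_unique _ _ H). Qed.

Lemma is_lim_seq_sum0 (g : nat -> nat -> R) (l : nat -> R) n :
  (forall j, (j < n)%nat -> is_lim_seq (fun N => g N j) (l j)) ->
  is_lim_seq (fun N => sum0 (g N) n) (sum0 l n).
Proof.
  induction n; intros H; simpl; [apply is_lim_seq_const |].
  apply is_lim_seq_plus'; [apply IHn; intros |]; apply H; lia.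
Qed.

Lemma limit_decomposition L k e B : admissible L -> admissible B -> (2 <= k)%nat ->
  -1 <= e <= 1 -> (2 <= fst (last L (0%nat, 0%R)))%nat ->
  Mlim (rev L ++ (k, e) :: B) =
  sum0 (fun j => (-1) ^ j * Mlim (rev (skipn j L)) * conv_lim k e B (firstn j L)) (length L)
  + (-1) ^ length L * conv_lim k e B L.
Proof.
  intros HL HB Hk He Hlast.
  assert (Hconv : forall l, admissible l -> is_lim_seq
            (sumR (fun x => mterm k e x * (Mtr (x - 1)%nat B * Mstr x l))) (conv_lim k e B l)).
  { intros l Hl. now apply Lim_seq_correct', conv_converges. }
  unfold Mlim at 1. apply lim_real.
  eapply is_lim_seq_ext; [intros N; symmetry; apply truncated_decomposition |].
  apply is_lim_seq_plus'; [apply is_lim_seq_sum0; intros j Hj |].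
  - apply is_lim_seq_mult'; [apply (is_lim_seq_scal_l _ ((-1) ^ j) (Mlim _)) |].
    + apply Lim_seq_correct', Mtr_rev_converges; [now apply Forall_skipn |].
      now rewrite last_skipn.
    + now apply Hconv, Forall_firstn.
  - apply (is_lim_seq_scal_l _ ((-1) ^ length L) (conv_lim k e B L)). now apply Hconv.
Qed.

(** * Convoluted values whose star part has leading weight 1 *)

Lemma MConv_unfold k1 ks x xs l1 ls y ys :
  MConv (k1 :: ks) (x :: xs) (l1 :: ls) (y :: ys) =
  real (Lim_seq (fun N => sumR (fun n =>
    Mtr (n - 1)%nat (combine ks xs) * Mstr n (combine ls ys) / (INR n) ^ (k1 + l1)
    * ((1 + y * (-1) ^ n) * (1 + x * (-1) ^ n) / 2)) N)).
Proof. reflexivity. Qed.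

Lemma real_Rbar_mult (a : R) (x : Rbar) : real (Rbar_mult a x) = a * real x.
Proof.
  destruct x as [r | |]; simpl; [reflexivity | |];
    destruct (Rle_dec 0 a) as [H | H];
    try destruct (Rle_lt_or_eq_dec 0 a H); simpl; ring.
Qed.

(* With a = e (-1)^n and a^2 = 1 the parity factor (1 + y(-1)^n)(1 + a)/2 is
   1 + a for y = e and 0 for y = -e. *)
Lemma parity_same a : a * a = 1 -> (1 + a) * (1 + a) / 2 = 1 + a.
Proof. intros Ha. replace ((1 + a) * (1 + a)) with (2 * (1 + a) + (a * a - 1)) by ring.
  rewrite Ha. field. Qed.

Lemma parity_opposite a : a * a = 1 -> (1 + - a) * (1 + a) / 2 = 0.
Proof. intros Ha. replace ((1 + - a) * (1 + a)) with (1 - a * a) by ring. rewrite Ha. field. Qed.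

Lemma parity_sq e n : is_sign e -> (e * (-1) ^ n) * (e * (-1) ^ n) = 1.
Proof. intros He. apply sign_sq, sign_mul; [exact He | apply pow_m1_sign]. Qed.

Lemma conv_same_sign k1 ks e xs ls ys : is_sign e ->
  MConv (k1 :: ks) (e :: xs) (1%nat :: ls) (e :: ys) =
  conv_lim (S k1) e (combine ks xs) (combine ls ys).
Proof.
  intros He. rewrite MConv_unfold. unfold conv_lim. f_equal. apply Lim_seq_ext. intros N.
  apply sumR_ext. intros n _. rewrite (parity_same _ (parity_sq e n He)).
  unfold mterm. rewrite Nat.add_1_r. unfold Rdiv. ring.
Qed.

(* Opposite leading signs: the parity factor vanishes for every n. *)
Lemma conv_opposite_sign k1 ks e xs ls ys : is_sign e ->
  MConv (k1 :: ks) (e :: xs) (1%nat :: ls) (- e :: ys) = 0.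
Proof.
  intros He. rewrite MConv_unfold.
  rewrite (Lim_seq_ext _ (fun _ => 0)), Lim_seq_const; [reflexivity |].
  intros N. rewrite <- (sumR_zero N). apply sumR_ext. intros n _.
  replace (- e * (-1) ^ n) with (- (e * (-1) ^ n)) by ring.
  rewrite (parity_opposite _ (parity_sq e n He)). ring.
Qed.

Lemma conv_zero_sign k1 ks e xs ls ys :
  MConv (k1 :: ks) (e :: xs) (1%nat :: ls) (0 :: ys) =
  / 2 * conv_lim (S k1) e (combine ks xs) (combine ls ys).
Proof.
  rewrite MConv_unfold. unfold conv_lim. rewrite <- real_Rbar_mult, <- Lim_seq_scal_l.
  f_equal. apply Lim_seq_ext. intros N. rewrite <- sumR_scal.
  apply sumR_ext. intros n _. unfold mterm. rewrite Nat.add_1_r. unfold Rdiv. ring.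
Qed.

(** * Sign bookkeeping *)

Definition signed_block (m : list nat) (s : R) (eps : list R) : list (nat * R) :=
  combine m (map (Rmult s) (rvec eps)).

Lemma lhs_index_list m eps s k ks xs : length eps = length m ->
  combine (rev m ++ k :: ks) (map (Rmult s) (qvec eps) ++ s :: xs)
  = rev (signed_block m s eps) ++ (k, s) :: combine ks xs.
Proof.
  intros Hlen. unfold qvec, signed_block.
  rewrite combine_app by (rewrite length_rev, length_map, length_rev, length_rvec; lia).
  rewrite map_rev, combine_rev by (rewrite length_map, length_rvec; lia). reflexivity.
Qed.

Lemma signed_block_last m s eps : length eps = length m ->
  fst (last (signed_block m s eps) (0%nat, 0%R)) = last m 0%nat.
Proof.
  intros Hlen. rewrite <- (last_map fst (signed_block m s eps) (0%nat, 0%R)).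
  unfold signed_block.
  rewrite map_fst_combine by (rewrite length_map, length_rvec; lia). reflexivity.
Qed.

Lemma pvec_prefix l j : List.Forall is_sign l -> (j < length l)%nat ->
  pvec (firstn (S j) l) =
  prodR (firstn (S j) l) :: map (Rmult (prodR (firstn (S j) l))) (firstn j (rvec l)).
Proof.
  intros Hl Hj. rewrite pvec_rvec by now apply Forall_firstn.
  rewrite firstn_length_le, firstn_cons by lia. cbn [map].
  rewrite Rmult_1_r, rvec_firstn, firstn_firstn, Nat.min_l by lia. reflexivity.
Qed.

Lemma signed_block_suffix m s eps j : length eps = length m -> (j < length m)%nat ->
  rev (skipn j (signed_block m s eps)) =
  combine (rev (skipn j m))
          (map (Rmult (s * prodR (firstn (S j) eps))) (qvec (skipn (S j) eps) ++ [1])).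
Proof.
  intros Hlen Hj. unfold signed_block.
  rewrite combine_skipn, <- combine_rev
    by (rewrite !length_skipn, length_map, length_rvec; lia).
  f_equal. rewrite skipn_map, rvec_skipn, (skipn_nth eps j 0) by lia.
  rewrite (firstn_S_nth eps j 0), prodR_app by lia.
  unfold qvec. change (rev (rvec (skipn (S j) eps)) ++ [1])
    with (rev (1 :: rvec (skipn (S j) eps))).
  rewrite map_rev, map_map. f_equal. cbn [rvec map prodR fold_right]. f_equal; [ring |].
  rewrite !map_map. apply map_ext. intros; ring.
Qed.

(* The j-th terms of the two sums on the right-hand side together give the j-th term of
   [limit_decomposition]: with P = e_1...e_{j+1}, the sign choice s with s P = etab
   reproduces both the tail and the prefix of the block, while for the other choice the
   convoluted value has opposite leading signs and vanishes. *)
Lemma paired_terms k1 ks xs m eps etab j :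
  is_sign etab -> List.Forall is_sign eps -> length eps = length m -> (j < length m)%nat ->
  (-1) ^ j * MMV (rev (skipn j m)) (qvec (skipn (S j) eps) ++ [1])
    * MConv (k1 :: ks) (etab :: xs) (1%nat :: firstn j m) (pvec (firstn (S j) eps))
  + (-1) ^ j * MMV (rev (skipn j m)) (map Ropp (qvec (skipn (S j) eps)) ++ [-1])
    * MConv (k1 :: ks) (etab :: xs) (1%nat :: firstn j m) (map Ropp (pvec (firstn (S j) eps)))
  = (-1) ^ j * Mlim (rev (skipn j (signed_block m etab eps)))
    * conv_lim (S k1) etab (combine ks xs) (firstn j (signed_block m etab eps)).
Proof.
  intros Hetab Heps Hlen Hj.
  set (L := signed_block m etab eps). set (P := prodR (firstn (S j) eps)).
  assert (HP : is_sign P) by (apply prodR_sign, Forall_firstn, Heps).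
  assert (Htail : forall s, s = etab * P ->
            MMV (rev (skipn j m)) (map (Rmult s) (qvec (skipn (S j) eps) ++ [1]))
            = Mlim (rev (skipn j L))).
  { intros s ->. unfold L. now rewrite signed_block_suffix. }
  assert (Hhead : forall s y, s * P = y ->
            MConv (k1 :: ks) (etab :: xs) (1%nat :: firstn j m)
                  (map (Rmult s) (pvec (firstn (S j) eps)))
            = MConv (k1 :: ks) (etab :: xs) (1%nat :: firstn j m)
                    (y :: map (Rmult y) (firstn j (rvec eps)))).
  { intros s y <-. rewrite pvec_prefix by (try assumption; lia).
    cbn [map]. fold P. rewrite map_map.
    f_equal. rewrite (map_ext _ (Rmult (s * P))) by (intros; ring). reflexivity. }
  assert (Hprefix : combine (firstn j m) (map (Rmult etab) (firstn j (rvec eps))) = firstn j L).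
  { unfold L, signed_block. now rewrite combine_firstn, firstn_map. }
  rewrite <- (map_Rmult_1 (qvec _ ++ [1])), <- (map_Rmult_1 (pvec _)) at 1.
  rewrite !map_Ropp_Rmult.
  replace (map (Rmult (-1)) (qvec (skipn (S j) eps)) ++ [-1])
    with (map (Rmult (-1)) (qvec (skipn (S j) eps) ++ [1]))
    by (rewrite map_app; simpl; do 2 f_equal; ring).
  pose proof (sign_sq etab Hetab) as Hsq.
  destruct (sign_mul _ _ Hetab HP) as [Ht | Ht].
  - assert (HPe : P = etab).
    { transitivity (etab * etab * P); [rewrite Hsq; ring | rewrite Rmult_assoc, Ht; ring]. }
    rewrite (Htail 1), (Hhead 1 etab), (Hhead (-1) (- etab))
      by (first [lra | rewrite HPe; ring]).
    rewrite conv_same_sign, conv_opposite_sign, Hprefix by exact Hetab. ring.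
  - assert (HPe : P = - etab).
    { transitivity (etab * etab * P); [rewrite Hsq; ring | rewrite Rmult_assoc, Ht; ring]. }
    rewrite (Htail (-1)), (Hhead 1 (- etab)), (Hhead (-1) etab)
      by (first [lra | rewrite HPe; ring]).
    rewrite conv_same_sign, conv_opposite_sign, Hprefix by exact Hetab. ring.
Qed.

Theorem mainTheorem11 (k1 : nat) (ks : list nat) (m : list nat)
  (eta eps : list R) :
  (0 < k1)%nat -> List.Forall (fun x => (0 < x)%nat) ks ->
  List.Forall (fun x => (0 < x)%nat) m -> (0 < length m)%nat ->
  (2 <= last m 0)%nat ->
  length eta = S (length ks) -> length eps = length m ->
  List.Forall is_sign eta -> List.Forall is_sign eps ->
  let p := length m in
  let etab := prodR eta in
  MMV (rev m ++ S k1 :: ks) (map (Rmult etab) (qvec eps) ++ pvec eta)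
  = sumR (fun j =>
        (-1) ^ (j - 1) *
        MMV (rev (skipn (j - 1) m)) (qvec (skipn j eps) ++ [1])
        * MConv (k1 :: ks) (pvec eta)
                (1%nat :: firstn (j - 1) m) (pvec (firstn j eps))) p
  + sumR (fun j =>
        (-1) ^ (j - 1) *
        MMV (rev (skipn (j - 1) m)) (map Ropp (qvec (skipn j eps)) ++ [-1])
        * MConv (k1 :: ks) (pvec eta)
                (1%nat :: firstn (j - 1) m) (map Ropp (pvec (firstn j eps)))) p
  + 2 * (-1) ^ p *
    MConv (k1 :: ks) (pvec eta) (1%nat :: m) (0 :: map (Rmult etab) (rvec eps)).
Proof.
  intros Hk1 Hks Hm Hp Hlast Heta Heps Heta_s Heps_s p etab.
  destruct eta as [| eta1 eta']; [discriminate |].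
  assert (Hetab : is_sign etab) by now apply prodR_sign.
  inversion Heta_s as [| ? ? _ Heta'_s]; subst.
  change (pvec (eta1 :: eta')) with (etab :: pvec eta').
  assert (HL : admissible (signed_block m etab eps)).
  { apply admissible_combine; auto. now apply sign_list_bounded, sign_map, sign_rvec. }
  assert (HB : admissible (combine ks (pvec eta'))).
  { apply admissible_combine; auto. now apply sign_list_bounded, sign_pvec. }
  assert (HlenL : length (signed_block m etab eps) = p).
  { unfold signed_block, p. rewrite length_combine, length_map, length_rvec. lia. }
  assert (Hlast_block : (2 <= fst (last (signed_block m etab eps) (0%nat, 0%R)))%nat)
    by now rewrite signed_block_last.
  change (MMV ?k ?e) with (Mlim (combine k e)) at 1.
  rewrite lhs_index_list, limit_decomposition by (auto using sign_bounded; lia).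
  rewrite conv_zero_sign, !sumR_as_sum0, <- sum0_plus, HlenL.
  f_equal; [| unfold signed_block; field].
  apply sum0_ext. intros j Hj. replace (S j - 1)%nat with j by lia.
  symmetry. now apply paired_terms.
Qed.
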